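(* Let $1<p_1,\ldots,p_m<\infty$ and let $f\in\mathbb{R}^{d_1\times\cdots\times d_m}$, $f\ge0$, be weakly irreducible. Suppose there is $i\in[m]$ such that $(m-1)p_i'\le p_k$ for every $k\in[m]\setminus\{i\}$. Then $f$ has a strictly positive singular vector $\mathbf x^*>0$ with $Q(\mathbf x^* )=\|f\|_{p_1,\ldots,p_m}$.
   Context: $f$ is identified with the multilinear form $f(\mathbf x)=\sum f_{j_1,\ldots,j_m}x_{1,j_1}\cdots x_{m,j_m}$ on $\prod_k\mathbb{R}^{d_k}$. $p'=p/(p-1)$. $Q(\mathbf x)=|f(\mathbf x)|/\prod_k\|\mathbf x_k\|_{p_k}$, $\|f\|_{p_1,\ldots,p_m}=\max Q$; singular vectors are critical points of $Q$ (with $f(\mathbf x)\ne0$). Weak irreducibility: the undirected graph on $\bigcup_k\{k\}\times[d_k]$ with $(k,j_k)\sim(l,j_l)$ ($k\ne l$) iff $f_{j_1,\ldots,j_m}>0$ for some choice of the remaining indices, is connected. *)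

From HB Require Import structures.
From mathcomp Require Import all_boot all_order all_algebra.
From mathcomp Require Import all_classical all_reals all_analysis.
Set Implicit Arguments. Unset Strict Implicit. Unset Printing Implicit Defensive.
Import Order.TTheory GRing.Theory Num.Theory.
Local Open Scope ring_scope.

Definition tidx (m : nat) (d : 'I_m -> nat) := {dffun forall k : 'I_m, 'I_(d k)}.

(* Vertices (k, j_k) of the disjoint union  U_k {k} x [d_k].  A point
   x = (x_1,...,x_m) of  prod_k R^{d_k}  is a function on these vertices:
   x_{k,j} = x (Tagged _ j)  with j : 'I_(d k). *)
Definition tvtx (m : nat) (d : 'I_m -> nat) := {k : 'I_m & 'I_(d k)}.

Definition ventry (m : nat) (d : 'I_m -> nat) (k : 'I_m) (j : 'I_(d k)) : tvtx d :=
  Tagged (fun l => 'I_(d l)) j.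

Definition mform (R : realType) (m : nat) (d : 'I_m -> nat)
  (f : tidx d -> R) (x : tvtx d -> R) : R :=
  \sum_(j : tidx d) f j * \prod_(k < m) x (ventry (j k)).

Definition pnorm (R : realType) (m : nat) (d : 'I_m -> nat)
  (p : R) (x : tvtx d -> R) (k : 'I_m) : R :=
  (\sum_(j < d k) `|x (ventry j)| `^ p) `^ (p^-1).

Definition Qfun (R : realType) (m : nat) (d : 'I_m -> nat)
  (p : 'I_m -> R) (f : tidx d -> R) (x : tvtx d -> R) : R :=
  `|mform f x| / \prod_(k < m) pnorm (p k) x k.

Definition admissible (R : realType) (m : nat) (d : 'I_m -> nat)
  (x : tvtx d -> R) : Prop :=
  forall k : 'I_m, exists j : 'I_(d k), x (ventry j) != 0.

Definition upd (R : realType) (m : nat) (d : 'I_m -> nat)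
  (x : tvtx d -> R) (v : tvtx d) (t : R) : tvtx d -> R :=
  fun w => if w == v then x w + t else x w.

Definition singular_vector (R : realType) (m : nat) (d : 'I_m -> nat)
  (p : 'I_m -> R) (f : tidx d -> R) (x : tvtx d -> R) : Prop :=
  [/\ admissible x, mform f x != 0 &
      forall v : tvtx d, is_derive (0 : R) (1 : R) (fun t => Qfun p f (upd x v t)) 0].

Definition wi_edge (R : realType) (m : nat) (d : 'I_m -> nat)
  (f : tidx d -> R) : rel (tvtx d) :=
  fun u v => (tag u != tag v) &&
    [exists j : tidx d, [&& j (tag u) == tagged u, j (tag v) == tagged v & 0 < f j]].

Definition weakly_irreducible (R : realType) (m : nat) (d : 'I_m -> nat)
  (f : tidx d -> R) : Prop :=
  forall u v : tvtx d, connect (wi_edge f) u v.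

Definition conjexp (R : realType) (p : R) : R := p / (p - 1).

(* By homogeneity, Q can be maximised on the product of the unit spheres
   sum_j |x_{k,j}|^{p_k} = 1, which is compact; as f >= 0, the entrywise absolute
   value of a maximiser is again a maximiser, so there is a maximiser x >= 0 with
   f(x) > 0.  Suppose some entry of x vanishes.  Weak irreducibility yields a
   multi-index j with f_j > 0 linking a vanishing entry x_{a,j_a} to a
   nonvanishing one x_{b,j_b}.  Let S be the set of blocks c with x_{c,j_c} = 0
   and A = sum_{c in S} 1/p_c.  Raising each x_{c,j_c}, c in S, to t^{1/p_c}
   multiplies the product of the norms by (1 + t)^A, but increases f(x) by at
   least K t^A with K > 0.  The hypothesis (m-1) p_i' <= p_k gives
   sum_{c <> l} 1/p_c < 1 for every block l; since b is not in S, A < 1, so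
   Q increases for small t > 0, a contradiction.  Hence x > 0 is an interior
   maximiser of Q, and all its partial derivatives vanish. *)

From HB Require Import structures.
From mathcomp Require Import all_boot all_order all_algebra.
From mathcomp Require Import all_classical all_reals all_analysis.
From mathcomp Require Import ring lra.
Import Order.TTheory GRing.Theory Num.Theory.
Import numFieldNormedType.Exports.
Set Implicit Arguments. Unset Strict Implicit. Unset Printing Implicit Defensive.
Local Open Scope ring_scope.

Section ExponentCondition.
Variables (R : realType) (m : nat) (p : 'I_m -> R) (i : 'I_m).
Hypotheses (m_gt1 : (1 < m)%N) (p_gt1 : forall k, 1 < p k)
  (p_ge : forall k, k != i -> (m - 1)%N%:R * conjexp (p i) <= p k).

Lemma sum_invr_exponents_lt1 (l : 'I_m) : \sum_(c | c != l) (p c)^-1 < 1.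
Proof.
have pi_gt0 : 0 < p i by apply: lt_trans (p_gt1 i).
have pi1_gt0 : 0 < p i - 1 by rewrite subr_gt0.
have m1_gt0 : 0 < (m - 1)%N%:R :> R by rewrite ltr0n subn_gt0.
pose q := ((m - 1)%N%:R * conjexp (p i))^-1.
have q_gt0 : 0 < q by rewrite invr_gt0 mulr_gt0 // divr_gt0.
have invp_le_q k : k != i -> (p k)^-1 <= q.
  move=> ki; have pk_gt0 : 0 < p k by apply: lt_trans (p_gt1 k).
  by rewrite lef_pV2 ?p_ge // posrE // mulr_gt0 // divr_gt0.
(* [g] majorizes [p^-1] and sums to exactly 1, so leaving out any term gives < 1. *)
pose g c := if c == i then (p i)^-1 else q.
have g_gt0 c : 0 < g c by rewrite /g; case: eqP => _ //; rewrite invr_gt0.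
have sum_g : \sum_c g c = 1.
  rewrite (bigD1 i) //= {1}/g eqxx (eq_bigr (fun=> q)) => [|c /negbTE]; last first.
    by rewrite /g => ->.
  rewrite sumr_const cardC1 card_ord -subn1 -mulr_natl /q /conjexp.
  by field; rewrite !gt_eqF.
apply: (le_lt_trans (y := \sum_(c | c != l) g c)).
  by apply: ler_sum => c _; rewrite /g; case: eqP => [->|/eqP]; last exact: invp_le_q.
by rewrite -sum_g [X in _ < X](bigD1 l) //= ltrDr.
Qed.

End ExponentCondition.

Section Normalization.
Variables (R : realType) (m : nat) (d : 'I_m -> nat).
Implicit Types (x y : tvtx d -> R) (f : tidx d -> R) (p : 'I_m -> R).

Definition bsum (q : R) x (k : 'I_m) : R := \sum_(j < d k) `|x (ventry j)| `^ q.

Definition unit_blocks p x := forall k, bsum (p k) x k = 1.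

Definition bscale (c : 'I_m -> R) x : tvtx d -> R := fun v => c (tag v) * x v.

Lemma pnormE q x k : pnorm q x k = bsum q x k `^ q^-1.
Proof. by []. Qed.

Lemma bsum_ge0 q x k : 0 <= bsum q x k.
Proof. by apply: sumr_ge0 => j _; apply: powR_ge0. Qed.

Lemma bsum_gt0 q x k : admissible x -> 0 < q -> 0 < bsum q x k.
Proof.
move=> /(_ k) [j xj] q_gt0; rewrite /bsum (bigD1 j) //=.
by rewrite ltr_pwDl ?powR_gt0 ?normr_gt0 // sumr_ge0 // => i _; apply: powR_ge0.
Qed.

Lemma pnorm_gt0 q x k : admissible x -> 0 < q -> 0 < pnorm q x k.
Proof. by move=> ax q_gt0; rewrite powR_gt0 // bsum_gt0. Qed.

Lemma pnorm_eq1 q x k : 0 < q -> (pnorm q x k == 1) = (bsum q x k == 1).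
Proof.
by move=> q_gt0; rewrite powR_eq1 ltNge bsum_ge0 invr_eq0 (gt_eqF q_gt0) /= orbF.
Qed.

Lemma unit_blocks_admissible p x : (forall k, 0 < p k) -> unit_blocks p x -> admissible x.
Proof.
move=> p_gt0 ux k.
case: (pickP (fun j : 'I_(d k) => x (ventry j) != 0)) => [j xj|x0]; first by exists j.
have := ux k; rewrite /bsum big1 => [/eqP|j _]; first by rewrite eq_sym oner_eq0.
by move: (x0 j) => /negbFE/eqP ->; rewrite normr0 powR0 // gt_eqF.
Qed.

Lemma Qfun_unit p f x : unit_blocks p x -> Qfun p f x = `|mform f x|.
Proof. by move=> ux; rewrite /Qfun big1 ?divr1 // => k _; rewrite pnormE ux powR1. Qed.

Lemma mform_bscale f c x : mform f (bscale c x) = (\prod_k c k) * mform f x.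
Proof.
rewrite /mform mulr_sumr; apply: eq_bigr => j _.
by rewrite /bscale /= big_split /= mulrCA.
Qed.

Lemma pnorm_bscale c x q k : 0 < c k -> 0 < q ->
  pnorm q (bscale c x) k = c k * pnorm q x k.
Proof.
move=> c_gt0 q_gt0; have bs : bsum q (bscale c x) k = c k `^ q * bsum q x k.
  rewrite /bsum mulr_sumr; apply: eq_bigr => j _.
  by rewrite /bscale /= normrM (gtr0_norm c_gt0) powRM // ltW.
rewrite !pnormE bs powRM ?powR_ge0 ?bsum_ge0 // -powRrM mulfV ?gt_eqF //.
by rewrite powRr1 // ltW.
Qed.

Lemma Qfun_bscale p f c x : (forall k, 0 < c k) -> (forall k, 0 < p k) ->
  Qfun p f (bscale c x) = Qfun p f x.
Proof.
move=> c_gt0 p_gt0; rewrite /Qfun mform_bscale.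
rewrite (eq_bigr _ (fun k _ => pnorm_bscale x (c_gt0 k) (p_gt0 k))) big_split /=.
rewrite normrM ger0_norm => [|]; last by apply: prodr_ge0 => k _; apply: ltW.
by rewrite -mulf_div mulfV ?mul1r //; apply/prodf_neq0 => k _; rewrite gt_eqF.
Qed.

Lemma exists_unit_rescaling p f x : (forall k, 0 < p k) -> admissible x ->
  exists2 y, unit_blocks p y & Qfun p f x = `|mform f y|.
Proof.
move=> p_gt0 ax; pose c k := (pnorm (p k) x k)^-1.
have c_gt0 k : 0 < c k by rewrite invr_gt0 pnorm_gt0.
have ucx : unit_blocks p (bscale c x).
  move=> k; apply/eqP; rewrite -pnorm_eq1 // pnorm_bscale //.
  by rewrite mulVf // gt_eqF // pnorm_gt0.
by exists (bscale c x); rewrite // -(Qfun_unit f ucx) Qfun_bscale.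
Qed.

End Normalization.

Lemma continuous_norm_powR (R : realType) (q : R) : 0 < q ->
  continuous (fun t : R => `|t| `^ q).
Proof.
move=> q_gt0 t0; have [->|t0_neq0] := eqVneq t0 0; last first.
  apply: (@continuous_comp _ _ _ (@Num.Def.normr R R) (fun t => t `^ q)).
    exact: norm_continuous.
  apply: differentiable_continuous; apply/derivable1_diffP.
  by apply: derivable_powR; rewrite in_itv /= andbT normr_gt0.
apply/cvgrPdist_lt => e e_gt0; rewrite normr0 powR0 ?gt_eqF //.
exists (e `^ q^-1); first by rewrite /= powR_gt0.
move=> t /=; rewrite !sub0r !normrN (ger0_norm (powR_ge0 _ _)) => te.
have -> : e = (e `^ q^-1) `^ q by rewrite -powRrM mulVf ?gt_eqF ?powRr1 // ltW.
by apply: gt0_ltr_powR; rewrite // nnegrE ?powR_ge0.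
Qed.

Section Compactness.
Import ArrowAsProduct.
Local Open Scope classical_set_scope.
Variables (R : realType) (m : nat) (d : 'I_m -> nat).

Lemma continuous_bsum (q : R) k : 0 < q ->
  continuous (fun x : tvtx d -> R => bsum q x k).
Proof.
move=> q_gt0; apply: continuous_big => [|j _ x]; first exact: add_continuous.
apply: (@continuous_comp _ _ _ (fun x : tvtx d -> R => x (ventry j))
  (fun t => `|t| `^ q)).
  exact: (@proj_continuous _ (fun _ : tvtx d => R)).
exact: continuous_norm_powR.
Qed.

Lemma continuous_norm_mform (f : tidx d -> R) :
  continuous (fun x : tvtx d -> R => `|mform f x|).
Proof.
move=> x; apply: (@continuous_comp _ _ _ (mform f)); last exact: norm_continuous.
move: x; apply: continuous_big => [|J _ y]; first exact: add_continuous.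
apply: (continuousM (s := fun=> f J)); first exact: cst_continuous.
move: y; apply: continuous_big => [|k _]; first exact: mul_continuous.
exact: (@proj_continuous _ (fun _ : tvtx d => R)).
Qed.

Lemma unit_blocks_norm_le1 (p : 'I_m -> R) (x : tvtx d -> R) :
  (forall k, 0 < p k) -> unit_blocks p x -> forall v, `|x v| <= 1.
Proof.
move=> p_gt0 ux [k j]; have : `|x (ventry j)| `^ p k <= 1.
  rewrite -(ux k) /bsum (bigD1 j) //= lerDl.
  by apply: sumr_ge0 => i _; apply: powR_ge0.
apply: contraTT; rewrite -!ltNge => x_gt1.
apply: (le_lt_trans (y := 1 `^ p k)); first by rewrite powR1.
by rewrite gt0_ltr_powR // nnegrE ?normr_ge0.
Qed.

Lemma unit_blocks_max_norm_mform (p : 'I_m -> R) (f : tidx d -> R)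
    (x1 : tvtx d -> R) :
  (forall k, 0 < p k) -> unit_blocks p x1 ->
  exists2 x0 : tvtx d -> R, unit_blocks p x0 &
    forall y : tvtx d -> R, unit_blocks p y -> `|mform f y| <= `|mform f x0|.
Proof.
move=> p_gt0 ux1.
pose B := [set x : tvtx d -> R | forall v, `[(-1 : R), 1] (x v)].
pose N := [set x : tvtx d -> R | unit_blocks p x].
have cB : compact B.
  exact: (@tychonoff _ (fun _ : tvtx d => R) _ (fun _ => @segment_compact R (-1) 1)).
have cN : closed N.
  have -> : N = \bigcap_(k in [set: 'I_m]) ((fun x => bsum (p k) x k) @^-1` [set 1]).
    by apply/seteqP; split => x /= ux k; [move=> _ |]; apply: ux.
  apply: closed_bigI => k _; apply: preimage_closed; last exact: closed_eq.
  by move=> x _; apply: continuous_bsum.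
have NB : N `<=` B.
  by move=> x ux v; rewrite /= in_itv /= -ler_norml; apply: unit_blocks_norm_le1.
have BN0 : (B `&` N) !=set0 by exists x1; split => //; apply: NB.
have [x0 /set_mem[_ ux0] x0max] := compact_EVT_max BN0 (compact_closedI cB cN)
  (continuous_subspaceT (@continuous_norm_mform f)).
by exists x0 => // y uy; apply: x0max; apply/mem_set; split => //; apply: NB.
Qed.

End Compactness.

Section NonnegativeTensor.
Variables (R : realType) (m : nat) (d : 'I_m -> nat) (f : tidx d -> R).
Hypothesis f_ge0 : forall J, 0 <= f J.

Lemma mform_ge0 (x : tvtx d -> R) : (forall v, 0 <= x v) -> 0 <= mform f x.
Proof. by move=> x_ge0; apply: sumr_ge0 => J _; rewrite mulr_ge0 ?prodr_ge0. Qed.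

Lemma norm_mform_le (x : tvtx d -> R) : `|mform f x| <= mform f (fun v => `|x v|).
Proof.
apply: le_trans (ler_norm_sum _ _ _) _; apply: ler_sum => J _.
by rewrite normrM normr_prod ger0_norm.
Qed.

Lemma exists_nonneg_maximizer (p : 'I_m -> R) J0 : (forall k, 0 < p k) -> 0 < f J0 ->
  exists x : tvtx d -> R, [/\ forall v, 0 <= x v, unit_blocks p x,
    forall y, admissible y -> Qfun p f y <= mform f x & 0 < mform f x].
Proof.
move=> p_gt0 fJ0_gt0.
pose e (v : tvtx d) : R := if tagged v == J0 (tag v) then 1 else 0.
have ue : unit_blocks p e.
  move=> k; rewrite /bsum (bigD1 (J0 k)) //= big1 => [|j /negbTE j_neq].
    by rewrite /e /= eqxx normr1 powR1 addr0.
  by rewrite /e /= j_neq normr0 powR0 // gt_eqF.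
have [x0 ux0 x0max] := unit_blocks_max_norm_mform f p_gt0 ue.
pose x v := `|x0 v|.
have ux : unit_blocks p x.
  by move=> k; rewrite -(ux0 k); apply: eq_bigr => j _; rewrite normr_id.
have xmax y : admissible y -> Qfun p f y <= mform f x.
  move=> ay; have [y' uy' ->] := exists_unit_rescaling f p_gt0 ay.
  exact: le_trans (x0max _ uy') (norm_mform_le x0).
have fJ0_le : f J0 <= mform f e.
  rewrite /mform (bigD1 J0) //= big1 => [|k _]; last by rewrite /e /= eqxx.
  rewrite mulr1 lerDl; apply: sumr_ge0 => J _; rewrite mulr_ge0 ?prodr_ge0 // => k _.
  by rewrite /e; case: ifP.
exists x; split => // [v|]; first exact: normr_ge0.
apply: (lt_le_trans fJ0_gt0); apply: le_trans fJ0_le (le_trans _ (xmax e _)).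
  by rewrite Qfun_unit // ler_norm.
exact: unit_blocks_admissible ue.
Qed.

Lemma exists_pos_entry : (1 < m)%N -> (forall k, (0 < d k)%N) ->
  weakly_irreducible f -> exists J, 0 < f J.
Proof.
move=> m_gt1 d_gt0 wi.
pose k0 : 'I_m := Ordinal (ltnW m_gt1); pose k1 : 'I_m := Ordinal m_gt1.
case/connectP: (wi (ventry (Ordinal (d_gt0 k0))) (ventry (Ordinal (d_gt0 k1)))).
case=> [_ /(congr1 tag)/(congr1 val) //|w s] /= /andP[/andP[_ /existsP[J]]].
by case/and3P => _ _ fJ_gt0 _ _; exists J.
Qed.

End NonnegativeTensor.

Lemma connect_crossing_edge (T : finType) (e : rel T) (P : pred T) x y :
  connect e x y -> ~~ P x -> P y -> exists a b, [/\ ~~ P a, P b & e a b].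
Proof.
case/connectP => s; elim: s x => [|z s IH] x /=; first by move=> _ -> /negPf ->.
move=> /andP[exz zs] ylast Px Py; case Pz: (P z); first by exists x, z.
by apply: (IH z zs ylast) => //; rewrite Pz.
Qed.

Lemma prod_powR (R : realType) (a : R) (I : Type) (r : seq I) (P : pred I) (e : I -> R) :
  0 < a -> \prod_(i <- r | P i) a `^ e i = a `^ (\sum_(i <- r | P i) e i).
Proof.
move=> a_gt0; elim: r => [|i r IH]; first by rewrite !big_nil powRr0.
rewrite !big_cons; case: (P i) => //; rewrite IH -powRD //.
by apply/implyP => _; rewrite gt_eqF.
Qed.

Lemma exists_gain (R : realType) (lam K A : R) : 0 < lam -> 0 < K -> A < 1 ->
  exists2 t, 0 < t & lam * (1 + t) `^ A < lam + K * t `^ A.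
Proof.
move=> lam_gt0 K_gt0 A_lt1; have K2_gt0 : 0 < K / (2 * lam) by rewrite divr_gt0 ?mulr_gt0.
(* chosen so that [lam * t] is exactly half of the gain [K * t ^ A] *)
pose t := (K / (2 * lam)) `^ (1 - A)^-1.
have t_gt0 : 0 < t by rewrite powR_gt0.
have t1A : t `^ (1 - A) = K / (2 * lam).
  by rewrite -powRrM mulVf ?powRr1 ?subr_eq0 ?gt_eqF // ltW.
clearbody t; have tA_gt0 : 0 < t `^ A by rewrite powR_gt0.
have lam_t : lam * t = K * t `^ A / 2.
  have tE : t = t `^ A * t `^ (1 - A).
    by rewrite -powRD ?subrKC ?powRr1 ?(ltW t_gt0) //; apply/implyP => _; rewrite gt_eqF.
  by rewrite {1}tE t1A; field; rewrite gt_eqF.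
exists t => //; have tA_le : (1 + t) `^ A <= 1 + t by rewrite ler1_powR ?lerDl ?ltW.
apply: le_lt_trans (ler_wpM2l (ltW lam_gt0) tA_le) _.
by rewrite mulrDr mulr1 lam_t; have := mulr_gt0 K_gt0 tA_gt0; lra.
Qed.

Lemma ventry_tagged (m : nat) (d : 'I_m -> nat) (u : tvtx d) (j : tidx d) :
  j (tag u) = tagged u -> ventry (j (tag u)) = u.
Proof. by case: u => k i /= ->. Qed.

Section Perturbation.
Variables (R : realType) (m : nat) (d : 'I_m -> nat) (p : 'I_m -> R) (f : tidx d -> R).
Variables (x : tvtx d -> R) (j : tidx d).
Hypotheses (p_gt0 : forall k, 0 < p k) (ux : unit_blocks p x).

Definition zero_blocks := [pred c : 'I_m | x (ventry (j c)) == 0].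

(* Raise each vanishing entry x_{c, j_c} to t^(1/p_c): this adds exactly t to
   the p_c-power sum of block c. *)
Definition bump (t : R) : tvtx d -> R := fun u =>
  if (x u == 0) && (tagged u == j (tag u)) then t `^ (p (tag u))^-1 else x u.

Lemma bump_ge t u : x u <= bump t u.
Proof. by rewrite /bump; case: ifP => [/andP[/eqP -> _]|_]; rewrite ?powR_ge0. Qed.

Lemma bsum_bump t k : 0 <= t ->
  bsum (p k) (bump t) k = 1 + (if zero_blocks k then t else 0).
Proof.
move=> t_ge0; have := ux k; rewrite /bsum (bigD1 (j k)) //= => ux_k.
rewrite (bigD1 (j k)) //=.
rewrite (eq_bigr (fun i => `|x (ventry i)| `^ p k)) => [|i /negbTE ji]; last first.
  by rewrite /bump /= ji andbF.
rewrite /bump /= eqxx andbT; case: eqP => [x0|_]; last by rewrite ux_k addr0.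
rewrite x0 normr0 powR0 ?gt_eqF // add0r in ux_k.
rewrite ux_k ger0_norm ?powR_ge0 // -powRrM mulVf ?gt_eqF // powRr1 //.
by rewrite addrC.
Qed.

Lemma prod_pnorm_bump t : 0 <= t ->
  \prod_k pnorm (p k) (bump t) k = (1 + t) `^ (\sum_(c | zero_blocks c) (p c)^-1).
Proof.
move=> t_ge0; rewrite -prod_powR ?ltr_pwDl // [RHS]big_mkcond /=.
by apply: eq_bigr => k _; rewrite pnormE bsum_bump //; case: ifP => /= ->; rewrite ?addr0 ?powR1.
Qed.

Lemma mform_bump_ge t : 0 < t -> (forall J, 0 <= f J) -> (forall v, 0 <= x v) ->
  (exists c, zero_blocks c) ->
  mform f x + f j * (\prod_(c | ~~ zero_blocks c) x (ventry (j c))) *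
    t `^ (\sum_(c | zero_blocks c) (p c)^-1) <= mform f (bump t).
Proof.
move=> t_gt0 f_ge0 x_ge0 [c0 Zc0].
have bump_j c : bump t (ventry (j c)) =
    if zero_blocks c then t `^ (p c)^-1 else x (ventry (j c)).
  by rewrite /bump /= eqxx andbT.
have prod_bump_j : \prod_c bump t (ventry (j c)) =
    t `^ (\sum_(c | zero_blocks c) (p c)^-1) *
    \prod_(c | ~~ zero_blocks c) x (ventry (j c)).
  rewrite (eq_bigr _ (fun c _ => bump_j c)) (bigID zero_blocks) /= -prod_powR //.
  by congr (_ * _); apply: eq_bigr => c; [move=> -> | move=> /negbTE ->].
have prod_x_j : \prod_c x (ventry (j c)) = 0 by rewrite (bigD1 c0) //= (eqP Zc0) mul0r.
rewrite /mform [X in _ <= X](bigD1 j) //= [X in X + _ <= _](bigD1 j) //=.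
rewrite prod_x_j mulr0 add0r prod_bump_j (mulrC (t `^ _)) mulrA addrC lerD2r.
apply: ler_sum => J _; rewrite ler_wpM2l // ler_prod // => c _.
by rewrite x_ge0 bump_ge.
Qed.

End Perturbation.

Lemma maximizer_gt0 (R : realType) (m : nat) (d : 'I_m -> nat) (p : 'I_m -> R)
    (f : tidx d -> R) (x : tvtx d -> R) :
  (forall k, 0 < p k) -> (forall J, 0 <= f J) -> weakly_irreducible f ->
  (forall l, \sum_(c | c != l) (p c)^-1 < 1) ->
  (forall v, 0 <= x v) -> unit_blocks p x ->
  (forall y, admissible y -> Qfun p f y <= mform f x) -> 0 < mform f x ->
  forall v, 0 < x v.
Proof.
move=> p_gt0 f_ge0 wi sum_lt1 x_ge0 ux xmax lam_gt0 v.
rewrite lt_def x_ge0 andbT; apply/negP => /negPn xv0.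
have [w xw] := unit_blocks_admissible p_gt0 ux (tag v).
have [a [b [/negPn/eqP xa xb /andP[_ /existsP[j]]]]] :=
  connect_crossing_edge (P := fun u => x u != 0) (wi v (ventry w)) xv0 xw.
case/and3P => /eqP/ventry_tagged ja /eqP/ventry_tagged jb fj_gt0.
pose Z := zero_blocks x j; pose A := \sum_(c | Z c) (p c)^-1.
have Za : Z (tag a) by rewrite /Z /= ja xa.
have A_lt1 : A < 1.
  apply: le_lt_trans (sum_lt1 (tag b)).
  rewrite /A [leLHS]big_mkcond [leRHS]big_mkcond /=; apply: ler_sum => c _.
  case: (eqVneq c (tag b)) => [->|cb] /=; first by rewrite /Z /= jb (negbTE xb).
  by case: ifP => // _; rewrite invr_ge0 ltW.
pose C := \prod_(c | ~~ Z c) x (ventry (j c)).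
have C_gt0 : 0 < C by rewrite prodr_gt0 // => c nZc; rewrite lt_def nZc x_ge0.
have [t t_gt0 gain] := exists_gain lam_gt0 (mulr_gt0 fj_gt0 C_gt0) A_lt1.
pose y := bump p x j t.
have y_ge0 u : 0 <= y u by apply: le_trans (x_ge0 u) (bump_ge _ _ _ _ _).
have ay : admissible y.
  move=> k; have [i xi] := unit_blocks_admissible p_gt0 ux k.
  by exists i; rewrite /y /bump (negbTE xi).
have my := mform_bump_ge p (f := f) (j := j) t_gt0 f_ge0 x_ge0 (ex_intro _ (tag a) Za).
have := xmax y ay; apply/negP; rewrite -ltNge /Qfun (prod_pnorm_bump j p_gt0 ux (ltW t_gt0)).
rewrite ger0_norm ?mform_ge0 // ltr_pdivlMr ?powR_gt0 ?addr_gt0 //.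
exact: lt_le_trans gain my.
Qed.

Section DerivableBig.
Variables (R : numFieldType) (V : normedModType R) (x v : V).

Lemma derivable_bigsum (I : Type) (r : seq I) (P : pred I) (F : I -> V -> R) :
  (forall i, derivable (F i) x v) -> derivable (fun y => \sum_(i <- r | P i) F i y) x v.
Proof.
move=> dF; elim: r => [|a r IH].
  by under eq_fun do rewrite big_nil; exact: derivable_cst.
under eq_fun do rewrite big_cons.
by case: (P a); [exact: derivableD | exact: IH].
Qed.

Lemma derivable_bigprod (I : Type) (r : seq I) (P : pred I) (F : I -> V -> R) :
  (forall i, derivable (F i) x v) -> derivable (fun y => \prod_(i <- r | P i) F i y) x v.
Proof.
move=> dF; elim: r => [|a r IH].
  by under eq_fun do rewrite big_nil; exact: derivable_cst.
under eq_fun do rewrite big_cons.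
by case: (P a); [exact: derivableM | exact: IH].
Qed.

End DerivableBig.

Lemma derivable_powR_comp (R : realType) (h : R -> R) (t q : R) :
  derivable h t 1 -> 0 < h t -> derivable (fun s => h s `^ q) t 1.
Proof.
move=> dh h_gt0; apply/derivable1_diffP.
apply: (@differentiable_comp _ _ _ _ h (fun u : R => u `^ q)); first exact/derivable1_diffP.
by apply/derivable1_diffP; apply: derivable_powR; rewrite in_itv /= h_gt0.
Qed.

Section CriticalPoint.
Variables (R : realType) (m : nat) (d : 'I_m -> nat) (p : 'I_m -> R) (f : tidx d -> R).
Hypotheses (p_gt0 : forall k, 0 < p k) (f_ge0 : forall J, 0 <= f J).
Variables (x : tvtx d -> R) (v : tvtx d).
Hypotheses (ax : admissible x) (x_gt0 : forall w, 0 < x w).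

Lemma upd0 : upd x v 0 = x.
Proof. by apply/funext => w; rewrite /upd; case: eqP => // ->; rewrite addr0. Qed.

Lemma upd_gt0 t : - x v < t -> forall w, 0 < upd x v t w.
Proof. by move=> xt w; rewrite /upd; case: eqP => [->|_] //; rewrite -ltrBlDl sub0r. Qed.

Lemma admissible_upd t : - x v < t -> admissible (upd x v t).
Proof. by move=> xt k; have [j _] := ax k; exists j; rewrite gt_eqF ?upd_gt0. Qed.

Lemma derivable_upd w t : derivable (fun s => upd x v s w) t 1.
Proof.
rewrite /upd; case: (w == v); last exact: derivable_cst.
by apply: derivableD; [exact: derivable_cst | exact: derivable_id].
Qed.

Lemma derivable_Qfun_upd t0 : - x v < t0 ->
  derivable (fun t => Qfun p f (upd x v t)) t0 1.
Proof.
move=> xt0; pose M s := mform f (upd x v s).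
pose B k s := \sum_(j < d k) upd x v s (ventry j) `^ p k.
pose D s := \prod_k B k s `^ (p k)^-1.
have dM : derivable M t0 1.
  apply: derivable_bigsum => J; apply: derivableM; first exact: derivable_cst.
  by apply: derivable_bigprod => k; apply: derivable_upd.
have B_gt0 k : 0 < B k t0.
  rewrite /B (eq_bigr (fun j => `|upd x v t0 (ventry j)| `^ p k)) => [|j _].
    by apply: bsum_gt0 => //; apply: admissible_upd.
  by rewrite ger0_norm // ltW // upd_gt0.
have dD : derivable D t0 1.
  apply: derivable_bigprod => k; apply: derivable_powR_comp (B_gt0 k).
  apply: derivable_bigsum => j; apply: derivable_powR_comp; first exact: derivable_upd.
  exact: upd_gt0.
have D_neq0 : D t0 != 0 by rewrite gt_eqF // prodr_gt0 // => k _; rewrite powR_gt0.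
apply: near_eq_derivable (derivableM dM (derivableV D_neq0 dD)).
have : t0 \in `]- x v, +oo[ by rewrite in_itv /= xt0.
(* near [t0] all entries are positive, so the absolute values in [Qfun] drop out *)
move/near_in_itvoy; apply: filterS => s; rewrite in_itv /= andbT => xs.
have abs_upd w : `|upd x v s w| = upd x v s w by rewrite ger0_norm // ltW // upd_gt0.
rewrite /Qfun ger0_norm; last by apply: mform_ge0 => // w; rewrite ltW // upd_gt0.
rewrite [LHS]/= /M /D; congr (_ * _^-1); apply: eq_bigr => k _.
by rewrite pnormE /bsum /B; congr (_ `^ _); apply: eq_bigr => j _; rewrite abs_upd.
Qed.

Lemma maximizer_critical : (forall y, admissible y -> Qfun p f y <= Qfun p f x) ->
  is_derive (0 : R) (1 : R) (fun t => Qfun p f (upd x v t)) 0.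
Proof.
move=> xmax; have xv_gt0 := x_gt0 v.
apply: (@derive1_at_max _ _ (- x v) (x v)).
- by rewrite ge0_cp // ltW.
- by move=> t; rewrite in_itv /= => /andP[xt _]; apply: derivable_Qfun_upd.
- by rewrite in_itv /= oppr_lt0 xv_gt0.
by move=> t; rewrite in_itv /= upd0 => /andP[xt _]; apply/xmax/admissible_upd.
Qed.

End CriticalPoint.

Unset Implicit Arguments.
Theorem theorem5 (R : realType) (m : nat) (d : 'I_m -> nat)
  (p : 'I_m -> R) (f : tidx d -> R) :
  (1 < m)%N ->
  (forall k, (0 < d k)%N) ->
  (forall k, 1 < p k) ->
  (forall j, 0 <= f j) ->
  weakly_irreducible f ->
  (exists i : 'I_m, forall k : 'I_m, k != i ->
      (m - 1)%N%:R * conjexp (p i) <= p k) ->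
  exists x : tvtx d -> R,
    [/\ forall v, 0 < x v,
        singular_vector p f x &
        forall y : tvtx d -> R, admissible y -> Qfun p f y <= Qfun p f x].
Proof.
move=> m_gt1 d_gt0 p_gt1 f_ge0 wi [i p_ge].
have p_gt0 k : 0 < p k := lt_trans ltr01 (p_gt1 k).
have [J0 fJ0_gt0] := exists_pos_entry m_gt1 d_gt0 wi.
have [x [x_ge0 ux xmax lam_gt0]] := exists_nonneg_maximizer f_ge0 p_gt0 fJ0_gt0.
have x_gt0 := maximizer_gt0 p_gt0 f_ge0 wi (sum_invr_exponents_lt1 m_gt1 p_gt1 p_ge)
  x_ge0 ux xmax lam_gt0.
have ax := unit_blocks_admissible p_gt0 ux.
have Qx : Qfun p f x = mform f x by rewrite Qfun_unit // ger0_norm // ltW.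
have x_max y : admissible y -> Qfun p f y <= Qfun p f x by rewrite Qx; apply: xmax.
exists x; split => //; split => [||v]; first exact: ax.
  by rewrite gt_eqF.
exact: maximizer_critical.
Qed.
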